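(* Let $\rho^w$ and $\rho^b$ be convex risk measures. Then an equal risk price exists if and only if the fair price interval is bounded (i.e. $p_0^w\in\mathbb{R}$ and $p_0^b\in\mathbb{R}$). Moreover, when it exists, the equal risk price equals \[p_0^*=\frac{\varrho^w(0)-\varrho^b(0)}{2},\] which is the center of the fair price interval $[p_0^b,p_0^w]$ if the latter is non-empty.
   Context: Let $(\Omega,\mathcal{F},(\mathcal{F}_t)_{0\le t\le T},\mathbb{P})$ be a filtered probability space, with a money market account with zero interest rate and a risky asset $S_t$, a locally bounded real-valued semimartingale adapted to the filtration; the set of equivalent local martingale measures for $S$ is non-empty. For $p_0\in\mathbb{R}$, the set of admissible self-financing strategies is $\mathcal{X}(p_0)=\{X: \exists\,\xi\ \text{adapted},\ \exists c\in\mathbb{R},\ X_t=p_0+\int_0^t\xi_s\,dS_s\ge c\ \forall t\in[0,T]\}$. The option pays $F(S_T,Y_T)$ at $T$, where $Y_t$ is an adapted auxiliary finite-dimensional process. A risk measure maps random liabilities (costs) in $\mathcal{L}_p(\Omega,\mathcal{F}_T,\mathbb{P})$ to $\mathbb{R}\cup\{\infty\}$. A convex risk measure $\rho$ satisfies: monotonicity ($X\le Z$ a.s. $\Rightarrow \rho(X)\le\rho(Z)$), translation invariance ($\rho(X+m)=\rho(X)+m$ for $m\in\mathbb{R}$), normalization $\rho(0)=0$, and convexity ($\rho(\lambda X+(1-\lambda)Z)\le\lambda\rho(X)+(1-\lambda)\rho(Z)$ for $\lambda\in[0,1]$). Given risk measures $\rho^w,\rho^b$, define the minimal risks $\varrho^w(p_0)=\inf_{X\in\mathcal{X}(p_0)}\rho^w(F(S_T,Y_T)-X_T)$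 and $\varrho^b(p_0)=\inf_{X\in\mathcal{X}(-p_0)}\rho^b(-F(S_T,Y_T)-X_T)$. The equal risk price is the unique $p_0^*\in\mathbb{R}$ such that $\varrho^w(p_0^* )=\varrho^b(p_0^* )\in\mathbb{R}$, when such a unique price exists. The fair price interval is $[p_0^b,p_0^w]$ with $p_0^b=\sup\{p_0:\varrho^b(p_0)\le 0\}$ and $p_0^w=\inf\{p_0:\varrho^w(p_0)\le 0\}$. *)

From HB Require Import structures.
From mathcomp Require Import all_boot all_order all_algebra.
From mathcomp Require Import all_classical all_reals all_analysis.
Set Implicit Arguments. Unset Strict Implicit. Unset Printing Implicit Defensive.
Import Order.TTheory GRing.Theory Num.Theory.
Local Open Scope classical_set_scope.
Local Open Scope ring_scope.

Section EqualRiskDefs.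
Context {d : measure_display} {Omega : measurableType d} {R : realType}.

Definition sub_sigma (G : set (set Omega)) :=
  sigma_algebra setT G /\ G `<=` measurable.

Definition filtration (T : R) (Fl : R -> set (set Omega)) :=
  (forall t, 0 <= t <= T -> sub_sigma (Fl t)) /\
  (forall s t, 0 <= s -> s <= t -> t <= T -> Fl s `<=` Fl t).

Definition G_measurable (G : set (set Omega)) (f : Omega -> R) :=
  forall B : set R, measurable B -> G (f @^-1` B).

Definition adapted (T : R) (Fl : R -> set (set Omega)) (X : R -> Omega -> R) :=
  forall t, 0 <= t <= T -> G_measurable (Fl t) (X t).

Definition inLp (P : probability Omega R) (p : \bar R) (G : set (set Omega))
  (f : Omega -> R) :=
  G_measurable G f /\ ('N[P]_p[EFin \o f] < +oo)%E.

(* Admissible self-financing strategies with initial wealth p0.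
   [stoch_int xi S t w] stands for the stochastic integral
   (\int_0^t xi_s dS_s)(w). *)
Definition admissible (T : R) (Fl : R -> set (set Omega))
  (stoch_int : (R -> Omega -> R) -> (R -> Omega -> R) -> R -> Omega -> R)
  (S : R -> Omega -> R) (p0 : R) : set (R -> Omega -> R) :=
  [set X | exists xi, adapted T Fl xi /\
     exists c : R, forall t, 0 <= t <= T -> forall w,
       X t w = p0 + stoch_int xi S t w /\ c <= X t w].

Definition convex_risk_measure (P : probability Omega R) (p : \bar R)
  (G : set (set Omega)) (rho : (Omega -> R) -> \bar R) :=
  (forall X, inLp P p G X -> rho X != -oo%E) /\
  (forall X Z, inLp P p G X -> inLp P p G Z ->
     {ae P, forall w, X w <= Z w} -> (rho X <= rho Z)%E) /\
  (forall X (m : R), inLp P p G X -> rho (fun w => X w + m) = (rho X + m%:E)%E) /\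
  rho (fun _ => 0) = 0%E /\
  (forall X Z (l : R), inLp P p G X -> inLp P p G Z -> 0 <= l <= 1 ->
     (rho (fun w => (l * X w + (1 - l) * Z w)%R) <=
      l%:E * rho X + (1 - l)%R%:E * rho Z)%E).

(* minimal risk of the writer (seller), liability H = F(S_T, Y_T) *)
Definition min_risk_w (P : probability Omega R) (p : \bar R) (T : R)
  (Fl : R -> set (set Omega)) stoch_int (S : R -> Omega -> R)
  (rho : (Omega -> R) -> \bar R) (H : Omega -> R) (p0 : R) : \bar R :=
  ereal_inf [set rho (fun w => H w - X T w) | X in
    [set X | admissible T Fl stoch_int S p0 X /\
             inLp P p (Fl T) (fun w => H w - X T w)]].

Definition min_risk_b (P : probability Omega R) (p : \bar R) (T : R)
  (Fl : R -> set (set Omega)) stoch_int (S : R -> Omega -> R)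
  (rho : (Omega -> R) -> \bar R) (H : Omega -> R) (p0 : R) : \bar R :=
  ereal_inf [set rho (fun w => - H w - X T w) | X in
    [set X | admissible T Fl stoch_int S (- p0) X /\
             inLp P p (Fl T) (fun w => - H w - X T w)]].

End EqualRiskDefs.

Definition equal_risk_price {R : realType} (rw rb : R -> \bar R) (p0 : R) :=
  rw p0 = rb p0 /\ rw p0 \is a fin_num.

Definition fair_w {R : realType} (rw : R -> \bar R) : \bar R :=
  ereal_inf [set p%:E | p in [set p | (rw p <= 0)%E]].
Definition fair_b {R : realType} (rb : R -> \bar R) : \bar R :=
  ereal_sup [set p%:E | p in [set p | (rb p <= 0)%E]].

From HB Require Import structures.
From mathcomp Require Import all_boot all_order all_algebra.
From mathcomp Require Import all_classical all_reals all_analysis.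
From mathcomp Require Import measurable_realfun ess_sup_inf.
From mathcomp Require Import ring lra.
Import Order.TTheory GRing.Theory Num.Theory.
Local Open Scope classical_set_scope.
Local Open Scope ring_scope.

(* Shifting an admissible strategy by a constant c gives an admissible strategy
   for the initial wealth shifted by c, so translation invariance of the risk
   measures makes the minimal risks affine in the price:
   rw p0 = rw 0 - p0 and rb p0 = rb 0 + p0.  Hence rw p0 = rb p0 has the unique
   solution (rw 0 - rb 0) / 2 when both rw 0 and rb 0 are finite and no
   solution otherwise, while the fair price interval is [- rb 0, rw 0]. *)

Lemma ereal_inf_shift (R : realType) (A : set (\bar R)) (c : R) :
  ereal_inf [set (x + c%:E)%E | x in A] = (ereal_inf A + c%:E)%E.
Proof.
apply/le_anti/andP; split.
  rewrite -leeBlDr //; apply/ereal_infP => x Ax.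
  by rewrite leeBlDr //; apply: ereal_inf_lbound; exists x.
by apply/ereal_infP => _ [x Ax <-]; apply: leeD2r; exact: ereal_inf_lbound.
Qed.

Section Lp_shift.
Context {d : measure_display} {Omega : measurableType d} {R : realType}.

Lemma G_measurable_addr (G : set (set Omega)) (f : Omega -> R) (c : R) :
  G_measurable G f -> G_measurable G (fun w => f w + c).
Proof.
move=> mf B mB; rewrite (_ : _ @^-1` B = f @^-1` ((+%R^~ c) @^-1` B)) //.
have mc : measurable_fun [set: R] (+%R^~ c) by apply: measurable_funD.
by apply: mf; rewrite -[_ @^-1` B]setTI; exact: mc.
Qed.

Lemma Lnorm_cst_lty (P : probability Omega R) (p : \bar R) (c : R) :
  (1 <= p)%E -> ('N[P]_p[cst c%:E] < +oo)%E.
Proof.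
case: p => [r _|_|//].
  by have := @Lfun_cst _ _ _ P c r; rewrite inE => /andP[_]; rewrite inE.
rewrite unlock /=; case: ifPn => // _.
apply: (@le_lt_trans _ _ `|c|%:E); last by rewrite ltry.
by apply/ess_supP; apply: nearW.
Qed.

Lemma inLp_addr (P : probability Omega R) (p : \bar R) (G : set (set Omega))
    (f : Omega -> R) (c : R) :
  (1 <= p)%E -> G `<=` measurable ->
  inLp P p G f -> inLp P p G (fun w => f w + c).
Proof.
move=> p1 GF [Gf Nf]; split; first exact: G_measurable_addr.
have mf : measurable_fun [set: Omega] f.
  by move=> _ B mB; rewrite setTI; apply/GF/Gf.
rewrite (le_lt_trans (eminkowski P mf (measurable_cst c) p1)) //.
by rewrite lte_add_pinfty // Lnorm_cst_lty.
Qed.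

End Lp_shift.

Section minimal_risk_shift.
Context {d : measure_display} {Omega : measurableType d} {R : realType}.
Context {P : probability Omega R} {p : \bar R} {T : R}.
Context {Fl : R -> set (set Omega)} {S : R -> Omega -> R}.
Context {stoch_int : (R -> Omega -> R) -> (R -> Omega -> R) -> R -> Omega -> R}.
Context {rho : (Omega -> R) -> \bar R}.
Hypothesis inLp_translation : forall f c,
  inLp P p (Fl T) f -> inLp P p (Fl T) (fun w => f w + c).
Hypothesis rho_translation : forall X (m : R),
  inLp P p (Fl T) X -> rho (fun w => X w + m) = (rho X + m%:E)%E.

Definition hedged_risks (K : Omega -> R) (q : R) : set (\bar R) :=
  [set rho (fun w => K w - X T w) | X in
    [set X | admissible T Fl stoch_int S q X /\
             inLp P p (Fl T) (fun w => K w - X T w)]].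

Lemma hedged_risks_shift K q1 q2 :
  hedged_risks K q1 `<=` [set (x + (q2 - q1)%:E)%E | x in hedged_risks K q2].
Proof.
move=> _ [X [[xi [xi_adapted [c Xc]]] KX] <-].
pose X' t w := X t w + (q2 - q1).
have KX' : inLp P p (Fl T) (fun w => K w - X' T w).
  have := @inLp_translation _ (q1 - q2) KX; congr inLp.
  by apply: funext => w; rewrite /X'; ring.
exists (rho (fun w => K w - X' T w)).
  exists X' => //; split => //; exists xi; split => //; exists (c + (q2 - q1)).
  move=> t t0T w; have [Xtw cX] := Xc t t0T w.
  by split; rewrite /X'; [rewrite Xtw; ring | lra].
rewrite -rho_translation //; congr rho; apply: funext => w; rewrite /X'; ring.
Qed.

Lemma hedged_risksE K q :
  hedged_risks K q = [set (x - q%:E)%E | x in hedged_risks K 0].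
Proof.
apply/seteqP; split.
  by move=> x /(@hedged_risks_shift K q 0) [y Ky <-]; exists y; rewrite ?sub0r.
move=> _ [x /(@hedged_risks_shift K 0 q) [y Ky <-] <-].
by rewrite subr0 -addeA -EFinD subrr adde0.
Qed.

Lemma ereal_inf_hedged_risks K q :
  ereal_inf (hedged_risks K q) = (ereal_inf (hedged_risks K 0) - q%:E)%E.
Proof. by rewrite hedged_risksE -EFinN ereal_inf_shift. Qed.

Lemma min_risk_wE H q : min_risk_w P p T Fl stoch_int S rho H q =
  (min_risk_w P p T Fl stoch_int S rho H 0 - q%:E)%E.
Proof. exact: ereal_inf_hedged_risks. Qed.

Lemma min_risk_bE H q : min_risk_b P p T Fl stoch_int S rho H q =
  (min_risk_b P p T Fl stoch_int S rho H 0 + q%:E)%E.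
Proof.
rewrite /min_risk_b -/(hedged_risks _ (- q)) -/(hedged_risks _ (- 0)) oppr0.
by rewrite ereal_inf_hedged_risks EFinN oppeK.
Qed.

End minimal_risk_shift.

Section affine_minimal_risks.
Context {R : realType}.
Context {a b : \bar R} {rw rb : R -> \bar R}.
Hypothesis rwE : forall q, rw q = (a - q%:E)%E.
Hypothesis rbE : forall q, rb q = (b + q%:E)%E.

Lemma equal_risk_priceP q : equal_risk_price rw rb q <->
  [/\ a \is a fin_num, b \is a fin_num & q = (fine a - fine b) / 2].
Proof.
rewrite /equal_risk_price rwE rbE; split.
  move=> [ab abfin].
  have /andP[afin _] : (a \is a fin_num) && (q%:E \is a fin_num).
    by rewrite -fin_numB.
  have /andP[bfin _] : (b \is a fin_num) && (q%:E \is a fin_num).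
    by rewrite -fin_numD -ab.
  split => //.
  move: ab; rewrite -(fineK afin) -(fineK bfin) -EFinB -EFinD => -[ab].
  by rewrite (_ : q = (fine a - fine b - (fine a - q - (fine b + q))) / 2);
     [rewrite ab subrr subr0 | field].
move=> [afin bfin ->]; rewrite -(fineK afin) -(fineK bfin) -EFinB -EFinD.
by split => //; congr EFin; field.
Qed.

Local Open Scope ereal_scope.

Lemma fair_wE : fair_w rw = a.
Proof.
rewrite /fair_w; case: a rwE => [r|rwoo|rwNoo].
- move=> rwr; apply/le_anti/andP; split.
    by apply: ereal_inf_lbound; exists r; rewrite //= rwr subee.
  apply/ereal_infP => _ [x /= xr <-].
  by move: xr; rewrite rwr -EFinB !lee_fin subr_le0.
- rewrite (_ : [set q | rw q <= 0] = set0) ?image_set0 ?ereal_inf0 //.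
  by apply/seteqP; split => x //=; rewrite rwoo.
- rewrite (_ : [set q | rw q <= 0] = setT) ?ereal_inf_real //.
  by apply/seteqP; split => x //= _; rewrite rwNoo leNye.
Qed.

Lemma fair_bE : fair_b rb = - b.
Proof.
rewrite /fair_b; case: b rbE => [r|rboo|rbNoo].
- move=> rbr; apply/le_anti/andP; split.
    apply/ereal_supP => _ [x /= xr <-].
    by move: xr; rewrite rbr -EFinD !lee_fin; lra.
  by apply: ereal_sup_ubound; exists (- r)%R; rewrite //= rbr -EFinD subrr.
- rewrite (_ : [set q | rb q <= 0] = set0) ?image_set0 ?ereal_sup0 //.
  by apply/seteqP; split => x //=; rewrite rboo.
- rewrite (_ : [set q | rb q <= 0] = setT) ?ereal_sup_real //.
  by apply/seteqP; split => x //= _; rewrite rbNoo leNye.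
Qed.

End affine_minimal_risks.

Theorem proposition1 (d : measure_display) (Omega : measurableType d)
  (R : realType) (P : probability Omega R) (p : \bar R) (hp : (1 <= p)%E)
  (T : R) (hT : 0 <= T) (Fl : R -> set (set Omega)) (hFl : filtration T Fl)
  (S : R -> Omega -> R) (hS : adapted T Fl S)
  (n : nat) (Y : 'I_n -> R -> Omega -> R) (hY : forall i, adapted T Fl (Y i))
  (F : R -> ('I_n -> R) -> R)
  (stoch_int : (R -> Omega -> R) -> (R -> Omega -> R) -> R -> Omega -> R)
  (rhow rhob : (Omega -> R) -> \bar R)
  (hw : convex_risk_measure P p (Fl T) rhow)
  (hb : convex_risk_measure P p (Fl T) rhob) :
  let H := fun w => F (S T w) (fun i => Y i T w) in
  let rw := min_risk_w P p T Fl stoch_int S rhow H in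
  let rb := min_risk_b P p T Fl stoch_int S rhob H in
  ((exists! p0, equal_risk_price rw rb p0) <->
     (fair_w rw \is a fin_num /\ fair_b rb \is a fin_num)) /\
  (forall p0, (exists! q, equal_risk_price rw rb q) ->
     equal_risk_price rw rb p0 ->
     p0%:E = ((rw 0%R - rb 0%R) * (2^-1)%R%:E)%E /\
     ((fair_b rb <= fair_w rw)%E ->
        p0%:E = ((fair_b rb + fair_w rw) * (2^-1)%R%:E)%E)).
Proof.
move=> H rw rb.
have FlT_measurable : Fl T `<=` measurable by case: (hFl.1 T); rewrite ?hT ?lexx.
have inLp_translation f c := @inLp_addr _ _ _ P p _ f c hp FlT_measurable.
have rwE q : rw q = (rw 0%R - q%:E)%E.
  exact: min_risk_wE inLp_translation hw.2.2.1 H q.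
have rbE q : rb q = (rb 0%R + q%:E)%E.
  exact: min_risk_bE inLp_translation hb.2.2.1 H q.
have priceP := equal_risk_priceP rwE rbE.
rewrite (fair_wE rwE) (fair_bE rbE) (fin_numN (rb 0%R)); split.
  split=> [[q [/priceP[afin bfin _] _]] // | [afin bfin]].
  exists ((fine (rw 0) - fine (rb 0)) / 2).
  by split=> [|q /priceP[_ _ ->]] //; apply/priceP.
move=> _ _ /priceP[+ + ->]; case: (rw 0) => // a; case: (rb 0) => // b _ _ /=.
by split=> [|_]; rewrite -?EFinN -EFinD -EFinM; congr EFin; field.
Qed.
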